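(* Let $A,B,C\in\mathfrak{sl}_4(\mathbb R)$ be diagonal matrices. Then the $G_2$-structure $(G_{A,B,C},\varphi)$ has torsion forms $\tau_0=0$, $\tau_1=0$, $\tau_2=-*d\psi$, $\tau_3=*d\varphi$, where $\psi=*\varphi$.
   Context: For commuting $A,B,C\in\mathfrak{sl}_4(\mathbb R)$, $\mathfrak g_{A,B,C}$ is the Lie algebra with basis $\{e_1,\dots,e_7\}$ in which $\langle e_7,e_1,e_2\rangle$ is an abelian subalgebra, $\mathfrak n=\langle e_3,\dots,e_6\rangle$ is an abelian ideal, and in the basis $\{e_3,\dots,e_6\}$, $\mathrm{ad}\,e_7|_{\mathfrak n}=A$, $\mathrm{ad}\,e_1|_{\mathfrak n}=B$, $\mathrm{ad}\,e_2|_{\mathfrak n}=C$; $G_{A,B,C}$ is the simply connected Lie group with this Lie algebra and $\varphi=e^{127}+e^{347}+e^{567}+e^{135}-e^{146}-e^{236}-e^{245}$ is the left-invariant positive 3-form ($\{e^i\}$ dual basis). The metric and orientation induced by $\varphi$ are those for which $\{e_1,\dots,e_7\}$ is an oriented orthonormal basis; $*$ is the corresponding Hodge star. The torsion forms of a $G_2$-structure $\varphi$ are the unique forms $\tau_i\in\Omega^i$, $i=0,1,2,3$ (with $\tau_2$ in the 14-dimensional and $\tau_3$ in the 27-dimensional $G_2$-irreducible component) such that $d\varphi=\tau_0\psi+3\tau_1\wedge\varphi+*\tau_3$ and $d\psi=4\tau_1\wedge\psi+\tau_2\wedge\varphi$. *)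

(* Left-invariant forms on the 7-dimensional Lie group
   G_{A,B,C} are identified with elements of Lambda g^*, encoded in the
   basis {e^I} (I an increasing multi-index, i.e. a subset of 'I_7).
   Index convention: the ordinal i : 'I_7 stands for e_{i+1}. *)
From HB Require Import structures.
From mathcomp Require Import all_boot all_order all_algebra.
From mathcomp Require Import reals.
Set Implicit Arguments. Unset Strict Implicit. Unset Printing Implicit Defensive.
Import Order.TTheory GRing.Theory Num.Theory.
Local Open Scope ring_scope.

Section Forms.
Variable R : realType.

Definition fscale (r : R) (a : {ffun {set 'I_7} -> R}) : {ffun {set 'I_7} -> R} :=
  [ffun K : {set 'I_7} => r * a K].

(* a (possibly inhomogeneous) element of Lambda (R^7)^*:  sum_I a_I e^I *)
Local Notation form := {ffun {set 'I_7} -> R}.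

Definition eI (I : {set 'I_7}) : form := [ffun K : {set 'I_7} => (K == I)%:R].
Definition e1 (i : 'I_7) : form := eI [set i].

(* sign of the shuffle (I,J): (-1)^{#{(i,j) : i in I, j in J, j < i}},
   so that e^I /\ e^J = sgnIJ I J e^{I u J} for disjoint I, J *)
Definition sgnIJ (I J : {set 'I_7}) : R :=
  (-1) ^+ #|[set p : 'I_7 * 'I_7 | [&& p.1 \in I, p.2 \in J & (p.2 < p.1)%N]]|.

Definition wedge (a b : form) : form :=
  [ffun K : {set 'I_7} => \sum_(I : {set 'I_7} | I \subset K) sgnIJ I (K :\: I) * a I * b (K :\: I)].

Definition is_deg (p : nat) (a : form) : Prop := forall K : {set 'I_7}, #|K| != p -> a K = 0.

(* Hodge star for the metric/orientation making e_1,...,e_7 an oriented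
   orthonormal basis:  * e^I = sgn(I, I^c) e^{I^c}. *)
Definition hodge (a : form) : form := [ffun K : {set 'I_7} => sgnIJ (~: K) K * a (~: K)].

(* Chevalley-Eilenberg differential of left-invariant forms, given structure
   constants c i j k := coefficient of e_k in [e_i, e_j]:
   d e^k (X,Y) = - e^k([X,Y]), i.e. d e^k = - sum_{i<j} c i j k e^i /\ e^j,
   extended as an antiderivation. *)
Definition d1 (c : 'I_7 -> 'I_7 -> 'I_7 -> R) (k : 'I_7) : form :=
  - \sum_(i : 'I_7) \sum_(j : 'I_7 | (i < j)%N) fscale (c i j k) (wedge (e1 i) (e1 j)).

Definition dform (c : 'I_7 -> 'I_7 -> 'I_7 -> R) (a : form) : form :=
  \sum_(I : {set 'I_7}) fscale (a I)
    (\sum_(i in I) fscale ((-1) ^+ #|[set j in I | (j < i)%N]|) (wedge (d1 c i) (eI (I :\ i)))).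

Definition o (k : nat) : 'I_7 := inord k.
Definition e3 (a b c : nat) : form :=
  wedge (wedge (e1 (o a.-1)) (e1 (o b.-1))) (e1 (o c.-1)).
Definition phiG2 : form :=
  e3 1 2 7 + e3 3 4 7 + e3 5 6 7 + e3 1 3 5 - e3 1 4 6 - e3 2 3 6 - e3 2 4 5.
Definition psiG2 : form := hodge phiG2.

(* Torsion forms (tau0,...,tau3) of phi w.r.t. the differential d:
   tau_i of degree i, tau2 in Lambda^2_14 = {b | b /\ psi = 0},
   tau3 in Lambda^3_27 = {g | g /\ phi = 0, g /\ psi = 0}, and
   d phi = tau0 psi + 3 tau1 /\ phi + * tau3,
   d psi = 4 tau1 /\ psi + tau2 /\ phi. *)
Definition is_torsion (d : form -> form) (phi t0 t1 t2 t3 : form) : Prop :=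
  let psi := hodge phi in
  [/\ is_deg 0 t0, is_deg 1 t1, is_deg 2 t2 & is_deg 3 t3] /\
  [/\ wedge t2 psi = 0, wedge t3 phi = 0 & wedge t3 psi = 0] /\
  d phi = wedge t0 psi + fscale 3 (wedge t1 phi) + hodge t3 /\
  d psi = fscale 4 (wedge t1 psi) + wedge t2 phi.

(* The Lie algebra g_{A,B,C}: basis e_1..e_7 (ordinals 0..6),
   <e7,e1,e2> abelian, n = <e3,..,e6> abelian ideal,
   ad e7|n = A, ad e1|n = B, ad e2|n = C in the basis e3..e6
   (matrix convention: [x, e_{3+j}] = sum_i M i j e_{3+i}). *)
Definition in_n (m : 'I_7) : bool := (2 <= m <= 5)%N.
Definition nI (m : 'I_7) : 'I_4 := inord (m - 2).
Definition adM (A B C : 'M[R]_4) (x : 'I_7) : 'M[R]_4 :=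
  if x == o 6 then A else if x == o 0 then B else if x == o 1 then C else 0.
Definition gABC (A B C : 'M[R]_4) (x y k : 'I_7) : R :=
  if ~~ in_n x && in_n y && in_n k then adM A B C x (nI k) (nI y)
  else if in_n x && ~~ in_n y && in_n k then - adM A B C y (nI k) (nI x)
  else 0.

End Forms.

(* For diagonal traceless A, B, C the structure constants of g_{A,B,C} are a linear
   combination, with the diagonal entries as coefficients, of the integral structure
   constants of the nine algebras in which one of A, B, C is E_rr - E_44 (r < 3) and the
   two others vanish.  The Chevalley-Eilenberg differential is linear in the structure
   constants, so d phi and d psi are combinations of nine integral forms, and the
   torsion conditions d phi /\ phi = 0 and *d phi /\ phi = 0 (giving tau_0 = tau_1 = 0),
   *d phi in Lambda^3_27, *d psi in Lambda^2_14 and d psi = - *d psi /\ phi are checked on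
   each of them by computing with sparse integer forms.
   Uniqueness of the torsion forms only uses the pointwise G_2 identities
   *(f psi /\ phi) = 7 f, alpha /\ phi /\ phi = 0, *(alpha /\ phi) /\ phi = -4 *alpha,
   *gamma /\ phi = gamma /\ psi and T^2 - T = 2 for T beta = *(beta /\ phi), which are
   linear and hence checked on the basis forms e^I of the relevant degree. *)

From HB Require Import structures.
From mathcomp Require Import all_boot all_order all_algebra.
From mathcomp Require Import reals.
From Stdlib Require PeanoNat.
From mathcomp Require Import ring lra zify.
Import Order.TTheory GRing.Theory Num.Theory.
Local Open Scope ring_scope.

Lemma card_ord_count n (P : pred nat) : #|[set j : 'I_n | P j]| = count P (iota 0 n).
Proof.
rewrite -sum1_card -sum1_count.
under eq_bigl => j do rewrite inE.
by rewrite -(big_mkord P (fun _ => 1%N)) /index_iota subn0.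
Qed.

Section FormAlgebra.
Variable R : realType.
Local Notation form := {ffun {set 'I_7} -> R}.
Implicit Types (a b c : form) (r s : R).

Lemma fscaler0 r : fscale r (0 : form) = 0.
Proof. by apply/ffunP => K; rewrite !ffunE mulr0. Qed.

Lemma fscale0r a : fscale 0 a = 0.
Proof. by apply/ffunP => K; rewrite !ffunE mul0r. Qed.

Lemma fscale1r a : fscale 1 a = a.
Proof. by apply/ffunP => K; rewrite !ffunE mul1r. Qed.

Lemma fscalerA r s a : fscale r (fscale s a) = fscale (r * s) a.
Proof. by apply/ffunP => K; rewrite !ffunE mulrA. Qed.

Lemma fscalerC r s a : fscale r (fscale s a) = fscale s (fscale r a).
Proof. by rewrite !fscalerA mulrC. Qed.

Lemma fscalerDr r a b : fscale r (a + b) = fscale r a + fscale r b.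
Proof. by apply/ffunP => K; rewrite !ffunE mulrDr. Qed.

Lemma fscalerN r a : fscale r (- a) = - fscale r a.
Proof. by apply/ffunP => K; rewrite !ffunE mulrN. Qed.

Lemma fscaler_sumr (I : Type) (t : seq I) (P : pred I) (F : I -> form) r :
  fscale r (\sum_(i <- t | P i) F i) = \sum_(i <- t | P i) fscale r (F i).
Proof.
apply/ffunP => K; rewrite !ffunE !sum_ffunE mulr_sumr.
by apply: eq_bigr => i _; rewrite ffunE.
Qed.

Lemma fscaler_suml (I : Type) (t : seq I) (P : pred I) (f : I -> R) a :
  fscale (\sum_(i <- t | P i) f i) a = \sum_(i <- t | P i) fscale (f i) a.
Proof.
apply/ffunP => K; rewrite !ffunE !sum_ffunE mulr_suml.
by apply: eq_bigr => i _; rewrite ffunE.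
Qed.

Lemma fscaler_inj r a b : r != 0 -> fscale r a = fscale r b -> a = b.
Proof.
move=> r_neq0 /ffunP eq_ab; apply/ffunP => K.
by have := eq_ab K; rewrite !ffunE => /(mulfI r_neq0).
Qed.

Lemma wedge0l a : wedge 0 a = 0.
Proof. by apply/ffunP => K; rewrite !ffunE big1 // => I _; rewrite ffunE mulr0 mul0r. Qed.


Lemma wedgeDl a b c : wedge (a + b) c = wedge a c + wedge b c.
Proof.
apply/ffunP => K; rewrite !ffunE -big_split.
by apply: eq_bigr => I _; rewrite !ffunE mulrDr mulrDl.
Qed.


Lemma wedgeZl r a b : wedge (fscale r a) b = fscale r (wedge a b).
Proof. apply/ffunP => K; rewrite !ffunE mulr_sumr; apply: eq_bigr => I _; rewrite ffunE; ring. Qed.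

Lemma wedgeZr r a b : wedge a (fscale r b) = fscale r (wedge a b).
Proof. apply/ffunP => K; rewrite !ffunE mulr_sumr; apply: eq_bigr => I _; rewrite ffunE; ring. Qed.

Lemma wedgeNl a b : wedge (- a) b = - wedge a b.
Proof.
apply/ffunP => K; rewrite !ffunE -sumrN.
by apply: eq_bigr => I _; rewrite ffunE mulrN mulNr.
Qed.


Lemma wedge_suml (I : Type) (t : seq I) (P : pred I) (F : I -> form) b :
  wedge (\sum_(i <- t | P i) F i) b = \sum_(i <- t | P i) wedge (F i) b.
Proof.
apply/ffunP => K; rewrite !ffunE sum_ffunE.
under eq_bigr => J _ do rewrite sum_ffunE mulr_sumr mulr_suml.
by rewrite exchange_big /=; apply: eq_bigr => i _; rewrite ffunE.
Qed.

Lemma wedge_sumr (I : Type) (t : seq I) (P : pred I) (F : I -> form) a :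
  wedge a (\sum_(i <- t | P i) F i) = \sum_(i <- t | P i) wedge a (F i).
Proof.
apply/ffunP => K; rewrite !ffunE sum_ffunE.
under eq_bigr => J _ do rewrite sum_ffunE mulr_sumr.
by rewrite exchange_big /=; apply: eq_bigr => i _; rewrite ffunE.
Qed.


Lemma hodgeD a b : hodge (a + b) = hodge a + hodge b.
Proof. by apply/ffunP => K; rewrite !ffunE mulrDr. Qed.



Lemma hodgeZ r a : hodge (fscale r a) = fscale r (hodge a).
Proof. by apply/ffunP => K; rewrite !ffunE mulrCA. Qed.

Lemma hodge_sum (I : Type) (t : seq I) (P : pred I) (F : I -> form) :
  hodge (\sum_(i <- t | P i) F i) = \sum_(i <- t | P i) hodge (F i).
Proof.
apply/ffunP => K; rewrite !ffunE !sum_ffunE mulr_sumr.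
by apply: eq_bigr => i _; rewrite ffunE.
Qed.

Lemma is_deg0 p : is_deg p (0 : form).
Proof. by move=> K _; rewrite ffunE. Qed.

Lemma is_degN p a : is_deg p a -> is_deg p (- a).
Proof. by move=> deg_a K /deg_a; rewrite ffunE => ->; rewrite oppr0. Qed.

Lemma subset_setD_eqE {T : finType} (I J K : {set T}) :
  (I \subset K) && (K :\: I == J) = [disjoint I & J] && (K == I :|: J).
Proof.
apply/andP/andP => [[sIK /eqP <-]|[dIJ /eqP ->]]; split.
- by rewrite disjoint_subset; apply/subsetP => x xI; rewrite !inE xI.
- by apply/eqP/setP => x; rewrite !inE; case: (boolP (x \in I)) => //= /(subsetP sIK).
- by apply/subsetP => x xI; rewrite inE xI.
- apply/eqP/setP => x; rewrite !inE; case: (boolP (x \in I)) => xI //=.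
  by rewrite (disjointFr dIJ xI).
Qed.

Lemma wedge_eI (I J : {set 'I_7}) : wedge (eI R I) (eI R J) =
  if [disjoint I & J] then fscale (sgnIJ R I J) (eI R (I :|: J)) else 0.
Proof.
apply/ffunP => K; rewrite ffunE big_mkcond (bigD1 I) //= big1 => [|L /negbTE L_I]; last first.
  by case: (L \subset K); rewrite // !ffunE L_I mulr0 mul0r.
rewrite !ffunE eqxx mulr1 addr0.
have := subset_setD_eqE I J K.
case: (I \subset K); case: (boolP [disjoint I & J]) => dIJ; rewrite ?ffunE //=.
- by move=> <-; case: eqP => [<-|]; rewrite ?mulr0.
- by move=> ->; rewrite mulr0.
- by move=> <-; rewrite mulr0.
Qed.

End FormAlgebra.

(* [[:: (c_1, m_1); ...; (c_n, m_n)]] stands for c_1 e^{I_1} + ... + c_n e^{I_n}, where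
   I_k is the set of bits of m_k (bit i for e_{i+1}); repeated masks are allowed. *)
Definition sform := seq (int * nat).

Definition bit (m i : nat) : bool := Nat.testbit m i.
Definition popcount (m : nat) : nat := count (bit m) (iota 0 7).
Definition below (m i : nat) : nat := count (fun j => bit m j && (j < i)%N) (iota 0 7).
Definition inversions (m n : nat) : nat := sumn [seq (bit m i * below n i)%N | i <- iota 0 7].
Definition shuffle_sign (m n : nat) : int := (-1) ^+ inversions m n.
Definition disjointb (m n : nat) : bool := all (fun i => ~~ (bit m i && bit n i)) (iota 0 7).
Definition compl (m : nat) : nat := Nat.lxor m 127.

Definition sopp (s : sform) : sform := [seq (- p.1, p.2) | p <- s].
Definition sscale (z : int) (s : sform) : sform := [seq (z * p.1, p.2) | p <- s].
Definition swedge (s t : sform) : sform :=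
  [seq (shuffle_sign p.2 q.2 * p.1 * q.1, Nat.lor p.2 q.2)
  | p <- s, q <- [seq q <- t | disjointb p.2 q.2]].
Definition shodge (s : sform) : sform :=
  [seq (shuffle_sign p.2 (compl p.2) * p.1, compl p.2) | p <- s].

Definition se1 (i : nat) : sform := [:: (1, (2 ^ i)%N)].
Definition se3 (a b c : nat) : sform := swedge (swedge (se1 a.-1) (se1 b.-1)) (se1 c.-1).
Definition sphi : sform :=
  se3 1 2 7 ++ se3 3 4 7 ++ se3 5 6 7 ++ se3 1 3 5 ++
  sopp (se3 1 4 6) ++ sopp (se3 2 3 6) ++ sopp (se3 2 4 5).
Definition spsi : sform := shodge sphi.

Definition coef (s : sform) (m : nat) : int :=
  foldr (fun p c => (if p.2 == m then p.1 else 0) + c) 0 s.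
Definition masks : seq nat := iota 0 128.
Definition eq_sform (s t : sform) : bool :=
  all (fun p => p.2 < 128)%N (s ++ t) && all (fun m => coef s m == coef t m) masks.
Definition sdeg (d : nat) (s : sform) : bool := all (fun p => popcount p.2 == d) s.

Definition bits (m : nat) : {set 'I_7} := [set i : 'I_7 | bit m i].

Lemma bit_lor m n i : bit (Nat.lor m n) i = bit m i || bit n i.
Proof. exact: PeanoNat.Nat.lor_spec. Qed.

Lemma bit_lxor m n i : bit (Nat.lxor m n) i = xorb (bit m i) (bit n i).
Proof. exact: PeanoNat.Nat.lxor_spec. Qed.

Lemma bits_lor m n : bits (Nat.lor m n) = bits m :|: bits n.
Proof. by apply/setP => i; rewrite !inE bit_lor. Qed.

Lemma bit_pow2 i j : bit (2 ^ i) j = (i == j).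
Proof.
have -> : (2 ^ i)%N = Nat.pow 2 i by elim: i => // i IH; rewrite expnS IH.
rewrite /bit PeanoNat.Nat.pow2_bits_eqb.
by case: PeanoNat.Nat.eqb_spec => [->|/eqP/negbTE]; rewrite ?eqxx.
Qed.

Lemma bits_pow2 (i : 'I_7) : bits (2 ^ i) = [set i].
Proof. by apply/setP => j; rewrite !inE bit_pow2 eq_sym. Qed.

Lemma bits_lxor_pow2 m (i : 'I_7) : bit m i -> bits (Nat.lxor m (2 ^ i)) = bits m :\ i.
Proof.
move=> m_i; apply/setP => j; rewrite !inE bit_lxor bit_pow2 val_eqE.
by case: (eqVneq i j) => [<-|_]; [rewrite m_i | case: (bit m j)].
Qed.

Lemma bits_compl m : bits (compl m) = ~: bits m.
Proof.
apply/setP => i; rewrite !inE bit_lxor.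
have -> : bit 127 i by case: i => [[|[|[|[|[|[|[|//]]]]]]]].
by case: (bit m i).
Qed.

Lemma disjoint_bits m n : [disjoint bits m & bits n] = disjointb m n.
Proof.
rewrite disjoint_subset; apply/subsetP/allP => [sub i|sub i]; rewrite ?mem_iota ?inE.
  move=> /andP [_ i_lt]; have := sub (Ordinal i_lt).
  by rewrite !inE; case: (bit m i) => //= ->.
by move=> m_i; have := sub i; rewrite mem_iota ltn_ord m_i => /(_ isT).
Qed.

Lemma card_bits m : #|bits m| = popcount m.
Proof. exact: card_ord_count. Qed.

Lemma card_below m (i : 'I_7) : #|[set j in bits m | (j < i)%N]| = below m i.
Proof. by rewrite /below -card_ord_count; apply: eq_card => j; rewrite !inE. Qed.

Lemma card_inversions m n :
  #|[set p : 'I_7 * 'I_7 | [&& p.1 \in bits m, p.2 \in bits n & (p.2 < p.1)%N]]| = inversions m n.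
Proof.
pose P (i j : 'I_7) := [&& bit m i, bit n j & (j < i)%N].
rewrite -sum1_card (eq_bigl (fun p => true && P p.1 p.2)) => [|p]; last by rewrite !inE.
rewrite -(pair_big_dep xpredT P (fun _ _ => 1%N)) /=.
rewrite /inversions sumnE big_map (_ : iota 0 7 = index_iota 0 7) // big_mkord.
apply: eq_bigr => i _.
rewrite sum1_card; case: (bit m i); last by rewrite mul0n; apply: eq_card0.
by rewrite mul1n /below -card_ord_count; apply: eq_card => j; rewrite inE.
Qed.

Lemma bit_high m i : (m < 128)%N -> (7 <= i)%N -> bit m i = false.
Proof.
move=> m_lt i_ge; case: (posnP m) => [->|m_gt0]; first exact: PeanoNat.Nat.bits_0.
apply: PeanoNat.Nat.bits_above_log2.
have : (Nat.log2 m < 7)%coq_nat by apply/(PeanoNat.Nat.log2_lt_pow2 m 7); rewrite /=; lia.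
lia.
Qed.

Lemma bits_inj m n : (m < 128)%N -> (n < 128)%N -> bits m = bits n -> m = n.
Proof.
move=> m_lt n_lt /setP eq_mn; apply: PeanoNat.Nat.bits_inj => i.
case: (ltnP i 7) => [i_lt|i_ge]; last by rewrite -!/(bit _ i) !bit_high.
by have := eq_mn (Ordinal i_lt); rewrite !inE.
Qed.

Lemma bits_onto (K : {set 'I_7}) : exists2 m, (m < 128)%N & bits m = K.
Proof.
pose f (m : 'I_128) := bits m.
have f_inj : injective f by move=> m n /bits_inj eq_mn; apply/val_inj/eq_mn.
have card_le : (#|{set 'I_7}| <= #|'I_128|)%N.
  by rewrite -cardsT -powersetT card_powerset cardsT !card_ord.
by have /codomP [m ->] := inj_card_onto f_inj card_le K; exists m.
Qed.

Lemma coef_sum s m : coef s m = \sum_(p <- s | p.2 == m) p.1.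
Proof.
elim: s => [|p s IH]; first by rewrite big_nil.
by rewrite big_cons /= IH; case: (p.2 == m); rewrite ?add0r.
Qed.

Definition sd1 (cz : nat -> nat -> nat -> int) (k : nat) : sform :=
  sopp (flatten [seq flatten [seq sscale (cz i j k) (swedge (se1 i) (se1 j))
                              | j <- iota 0 7 & (i < j)%N]
                | i <- iota 0 7]).
Definition sdeI (cz : nat -> nat -> nat -> int) (m : nat) : sform :=
  flatten [seq sscale ((-1) ^+ below m i) (swedge (sd1 cz i) [:: (1, Nat.lxor m (2 ^ i))])
          | i <- iota 0 7 & bit m i].
Definition sdform (cz : nat -> nat -> nat -> int) (s : sform) : sform :=
  flatten [seq sscale p.1 (sdeI cz p.2) | p <- s].

Section Interpretation.
Variable R : realType.
Local Notation form := {ffun {set 'I_7} -> R}.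
Implicit Types (s t : sform) (m n : nat).

Definition form_of s : form := [ffun K => \sum_(p <- s | bits p.2 == K) p.1%:~R].

Lemma form_of_nil : form_of [::] = 0.
Proof. by apply/ffunP => K; rewrite !ffunE big_nil. Qed.

Lemma form_of_cat s t : form_of (s ++ t) = form_of s + form_of t.
Proof. by apply/ffunP => K; rewrite !ffunE big_cat. Qed.

Lemma form_of_flatten (A : Type) (r : seq A) (f : A -> sform) :
  form_of (flatten (map f r)) = \sum_(x <- r) form_of (f x).
Proof. by elim: r => [|x r IH]; rewrite ?big_nil ?form_of_nil // big_cons form_of_cat IH. Qed.

Lemma form_of_map (f : int * nat -> int * nat) s :
  form_of (map f s) = \sum_(p <- s) form_of [:: f p].
Proof. by elim: s => [|p s IH]; rewrite ?big_nil ?form_of_nil // big_cons -IH -form_of_cat. Qed.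

Lemma form_of_sum s : form_of s = \sum_(p <- s) form_of [:: p].
Proof. by rewrite -form_of_map map_id. Qed.

Lemma form_of_sopp s : form_of (sopp s) = - form_of s.
Proof.
apply/ffunP => K; rewrite !ffunE big_map -sumrN.
by apply: eq_bigr => p _; rewrite intrN.
Qed.

Lemma form_of_sscale z s : form_of (sscale z s) = fscale z%:~R (form_of s).
Proof.
apply/ffunP => K; rewrite !ffunE big_map mulr_sumr.
by apply: eq_bigr => p _; rewrite intrM.
Qed.

Lemma form_of1 (p : int * nat) : form_of [:: p] = fscale p.1%:~R (eI R (bits p.2)).
Proof.
apply/ffunP => K; rewrite !ffunE big_cons big_nil eq_sym.
by case: eqP; rewrite ?addr0 ?mulr1 ?mulr0.
Qed.

Lemma eI_bits m : eI R (bits m) = form_of [:: (1, m)].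
Proof. by rewrite form_of1 fscale1r. Qed.

Lemma e1_form_of (i : 'I_7) : e1 R i = form_of (se1 i).
Proof. by rewrite /e1 -bits_pow2 eI_bits. Qed.

Lemma sgnIJ_bits m n : sgnIJ R (bits m) (bits n) = (shuffle_sign m n)%:~R.
Proof. by rewrite /sgnIJ card_inversions rmorphXn rmorphN1. Qed.

Lemma wedge_form_of1 (p q : int * nat) : wedge (form_of [:: p]) (form_of [:: q]) =
  if disjointb p.2 q.2
  then form_of [:: (shuffle_sign p.2 q.2 * p.1 * q.1, Nat.lor p.2 q.2)] else 0.
Proof.
rewrite !form_of1 wedgeZl wedgeZr wedge_eI disjoint_bits.
case: disjointb; last by rewrite !fscaler0.
by rewrite !fscalerA bits_lor sgnIJ_bits !intrM mulrC mulrA.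
Qed.

Lemma form_of_swedge s t : form_of (swedge s t) = wedge (form_of s) (form_of t).
Proof.
rewrite /swedge form_of_flatten [in RHS]form_of_sum wedge_suml; apply: eq_bigr => p _.
rewrite form_of_map big_filter (form_of_sum t) wedge_sumr big_mkcond.
by apply: eq_bigr => q _; rewrite wedge_form_of1; case: disjointb.
Qed.

Lemma form_of_shodge s : form_of (shodge s) = hodge (form_of s).
Proof.
apply/ffunP => K; rewrite !ffunE big_map mulr_sumr.
apply: eq_big => [p|p /eqP <-] /=; rewrite bits_compl.
  by apply/eqP/eqP => [<-|->]; rewrite setCK.
by rewrite setCK intrM -bits_compl sgnIJ_bits.
Qed.

Lemma phiG2_form_of : phiG2 R = form_of sphi.
Proof.
have e3_form_of a b c : (a.-1 < 7)%N -> (b.-1 < 7)%N -> (c.-1 < 7)%N ->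
    e3 R a b c = form_of (se3 a b c).
  by move=> a_lt b_lt c_lt; rewrite /e3 /se3 !e1_form_of /o !inordK // !form_of_swedge.
rewrite /phiG2 /sphi 6!form_of_cat 3!form_of_sopp !addrA.
by rewrite !e3_form_of.
Qed.

Lemma psiG2_form_of : psiG2 R = form_of spsi.
Proof. by rewrite /psiG2 phiG2_form_of form_of_shodge. Qed.

Lemma form_of_bits s m : all (fun p => p.2 < 128)%N s -> (m < 128)%N ->
  form_of s (bits m) = (coef s m)%:~R.
Proof.
move=> /allP s_lt m_lt; rewrite ffunE coef_sum rmorph_sum big_seq_cond [RHS]big_seq_cond.
apply: eq_bigl => p; case p_s: (p \in s) => //=.
by apply/eqP/eqP => [/bits_inj ->|->] //; exact: s_lt.
Qed.

Lemma form_of_eq s t : eq_sform s t -> form_of s = form_of t.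
Proof.
move=> /andP []; rewrite all_cat => /andP [s_lt t_lt] /allP eq_coef.
apply/ffunP => K; have [m m_lt <-] := bits_onto K.
by rewrite !form_of_bits // (eqP (eq_coef m _)) // mem_iota.
Qed.

Definition intc (cz : nat -> nat -> nat -> int) (i j k : 'I_7) : R := (cz i j k)%:~R.

Definition deI (c : 'I_7 -> 'I_7 -> 'I_7 -> R) (I : {set 'I_7}) : form :=
  \sum_(i in I) fscale ((-1) ^+ #|[set j in I | (j < i)%N]|) (wedge (d1 c i) (eI R (I :\ i))).

Lemma form_of_sd1 cz (k : 'I_7) : form_of (sd1 cz k) = d1 (intc cz) k.
Proof.
rewrite /d1 /sd1 form_of_sopp form_of_flatten; congr (- _).
rewrite (_ : iota 0 7 = index_iota 0 7) // big_mkord; apply: eq_bigr => i _.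
rewrite form_of_flatten big_filter big_mkord.
by apply: eq_bigr => j _; rewrite form_of_sscale form_of_swedge -!e1_form_of.
Qed.

Lemma form_of_sdeI cz m : form_of (sdeI cz m) = deI (intc cz) (bits m).
Proof.
rewrite /deI /sdeI form_of_flatten big_filter (_ : iota 0 7 = index_iota 0 7) // big_mkord.
apply: eq_big => [i|i m_i]; first by rewrite inE.
rewrite form_of_sscale rmorphXn rmorphN1 card_below form_of_swedge form_of_sd1 -eI_bits.
by rewrite bits_lxor_pow2.
Qed.

Lemma dform_form_of c s :
  dform c (form_of s) = \sum_(p <- s) fscale p.1%:~R (deI c (bits p.2)).
Proof.
rewrite (_ : dform c _ = \sum_I fscale (form_of s I) (deI c I)) //.
under eq_bigr => I _ do rewrite ffunE fscaler_suml big_mkcond.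
rewrite exchange_big; apply: eq_bigr => p _.
rewrite (bigD1 (bits p.2)) // eqxx big1 /= ?addr0 // => I.
by rewrite eq_sym => /negbTE ->.
Qed.

Lemma dform_intc cz s : dform (intc cz) (form_of s) = form_of (sdform cz s).
Proof.
rewrite dform_form_of /sdform form_of_flatten; apply: eq_bigr => p _.
by rewrite form_of_sscale form_of_sdeI.
Qed.

End Interpretation.

Section LinearCombinations.
Variable R : realType.
Local Notation form := {ffun {set 'I_7} -> R}.
Variables (Q : eqType) (r : seq Q) (mu : Q -> R).

Definition lincomb (X : Q -> sform) : form := \sum_(q <- r) fscale (mu q) (form_of R (X q)).

Lemma lincomb_nil : lincomb (fun _ => [::]) = 0.
Proof. by rewrite /lincomb big1 // => q _; rewrite form_of_nil fscaler0. Qed.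

Lemma lincomb_cat X Y : lincomb X + lincomb Y = lincomb (fun q => X q ++ Y q).
Proof. by rewrite /lincomb -big_split; apply: eq_bigr => q _; rewrite form_of_cat fscalerDr. Qed.

Lemma lincomb_sopp X : - lincomb X = lincomb (fun q => sopp (X q)).
Proof. by rewrite /lincomb -sumrN; apply: eq_bigr => q _; rewrite form_of_sopp fscalerN. Qed.

Lemma lincomb_sscale (z : int) X : fscale z%:~R (lincomb X) = lincomb (fun q => sscale z (X q)).
Proof.
by rewrite /lincomb fscaler_sumr; apply: eq_bigr => q _; rewrite form_of_sscale fscalerC.
Qed.

Lemma lincomb_shodge X : hodge (lincomb X) = lincomb (fun q => shodge (X q)).
Proof. by rewrite /lincomb hodge_sum; apply: eq_bigr => q _; rewrite hodgeZ form_of_shodge. Qed.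

Lemma lincomb_swedge X t : wedge (lincomb X) (form_of R t) = lincomb (fun q => swedge (X q) t).
Proof. by rewrite /lincomb wedge_suml; apply: eq_bigr => q _; rewrite wedgeZl form_of_swedge. Qed.

Lemma eq_lincomb X Y : {in r, forall q, eq_sform (X q) (Y q)} -> lincomb X = lincomb Y.
Proof.
move=> eq_XY; rewrite /lincomb big_seq [RHS]big_seq; apply: eq_bigr => q q_r.
by have /form_of_eq -> := eq_XY q q_r.
Qed.

Lemma lincomb_eq0 X : {in r, forall q, eq_sform (X q) [::]} -> lincomb X = 0.
Proof. by move=> /eq_lincomb ->; exact: lincomb_nil. Qed.

Lemma is_deg_lincomb d X : {in r, forall q, sdeg d (X q)} -> is_deg d (lincomb X).
Proof.
move=> deg_X K K_d; rewrite /lincomb sum_ffunE big_seq big1 // => q q_r.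
rewrite !ffunE big_seq_cond big1 ?mulr0 // => p /andP [p_X /eqP bits_p].
have /eqP p_d := allP (deg_X q q_r) p p_X.
by move: K_d; rewrite -bits_p card_bits p_d eqxx.
Qed.

End LinearCombinations.

Arguments lincomb {R Q}.

Section G2Identities.
Variable R : realType.
Local Notation form := {ffun {set 'I_7} -> R}.
Local Notation phi := (phiG2 R).
Local Notation psi := (psiG2 R).
Local Notation basis_lincomb u := (lincomb masks (fun m => u (bits m))).

Lemma form_basis_dec (u : form) : u = basis_lincomb u (fun m => [:: (1, m)]).
Proof.
apply/ffunP => K; rewrite /lincomb sum_ffunE; have [m0 m0_lt <-] := bits_onto K.
have m0_masks : m0 \in masks by rewrite mem_iota.
rewrite (bigD1_seq m0 m0_masks (iota_uniq 0 128)) /= big_seq_cond.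
rewrite big1 => [|m /andP [m_masks m_m0]].
  by rewrite ffunE -eI_bits ffunE eqxx mulr1 addr0.
rewrite ffunE -eI_bits ffunE; case: eqP => [/bits_inj eq_m|]; rewrite ?mulr0 //.
by move: m_m0; rewrite eq_m ?eqxx //; move: m_masks; rewrite mem_iota.
Qed.

Lemma eq_basis_lincomb_deg {d} {u : form} {X Y} : is_deg d u ->
  all (fun m => (popcount m != d) || eq_sform (X m) (Y m)) masks ->
  basis_lincomb u X = basis_lincomb u Y.
Proof.
move=> deg_u /allP eq_XY; rewrite /lincomb big_seq [RHS]big_seq; apply: eq_bigr => m m_masks.
case/orP: (eq_XY m m_masks) => [m_d|/form_of_eq -> //].
by rewrite deg_u ?fscale0r // card_bits.
Qed.

Lemma hodgeK : involutive (@hodge R).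
Proof.
move=> u; rewrite [in LHS](form_basis_dec u) !lincomb_shodge [in RHS](form_basis_dec u).
by apply: eq_lincomb; apply/allP; vm_compute.
Qed.

Lemma hodge_inj : injective (@hodge R).
Proof. exact: inv_inj hodgeK. Qed.

Lemma hodge_wedge_psi_phi (f : form) :
  is_deg 0 f -> hodge (wedge (wedge f psi) phi) = fscale 7 f.
Proof.
move=> deg_f; rewrite psiG2_form_of phiG2_form_of (form_basis_dec f).
rewrite !lincomb_swedge lincomb_shodge -[7 : R]/((7 : int)%:~R) lincomb_sscale.
by apply: (eq_basis_lincomb_deg deg_f); vm_compute.
Qed.

Lemma wedge_phi_phi (a : form) : is_deg 1 a -> wedge (wedge a phi) phi = 0.
Proof.
move=> deg_a; rewrite phiG2_form_of (form_basis_dec a) !lincomb_swedge.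
rewrite -(@lincomb_nil _ _ masks (fun m => a (bits m))).
by apply: (eq_basis_lincomb_deg deg_a); vm_compute.
Qed.

Lemma wedge_hodge_wedge_phi (a : form) : is_deg 1 a ->
  wedge (hodge (wedge a phi)) phi = fscale (-4) (hodge a).
Proof.
move=> deg_a; rewrite phiG2_form_of (form_basis_dec a) !lincomb_swedge !lincomb_shodge.
rewrite lincomb_swedge -[-4 : R]/((-4 : int)%:~R) lincomb_sscale.
by apply: (eq_basis_lincomb_deg deg_a); vm_compute.
Qed.

Lemma wedge_hodge_phi (g : form) : is_deg 3 g -> wedge (hodge g) phi = wedge g psi.
Proof.
move=> deg_g; rewrite psiG2_form_of phiG2_form_of (form_basis_dec g).
rewrite lincomb_shodge !lincomb_swedge.
by apply: (eq_basis_lincomb_deg deg_g); vm_compute.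
Qed.

(* On 2-forms, [b |-> *(b /\ phi)] has eigenvalues 2 on Lambda^2_7 and -1 on Lambda^2_14. *)
Lemma hodge_wedge_phi_quadratic (b : form) : is_deg 2 b ->
  hodge (wedge (hodge (wedge b phi)) phi) - hodge (wedge b phi) = fscale 2 b.
Proof.
move=> deg_b; rewrite phiG2_form_of (form_basis_dec b) !lincomb_swedge !lincomb_shodge.
rewrite lincomb_swedge lincomb_shodge lincomb_sopp lincomb_cat.
rewrite -[2 : R]/((2 : int)%:~R) lincomb_sscale.
by apply: (eq_basis_lincomb_deg deg_b); vm_compute.
Qed.

Lemma torsion_unique (d : form -> form) t0 t1 t2 t3 s0 s1 s2 s3 :
  is_torsion d phi t0 t1 t2 t3 -> is_torsion d phi s0 s1 s2 s3 ->
  [/\ t0 = s0, t1 = s1, t2 = s2 & t3 = s3].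
Proof.
rewrite /is_torsion -/psi.
move=> [[t0_0 t1_1 t2_2 t3_3] [[_ t3_phi t3_psi] [dphi_t dpsi_t]]].
move=> [[s0_0 s1_1 s2_2 s3_3] [[_ s3_phi s3_psi] [dphi_s dpsi_s]]].
have scalar_part (u0 u1 u3 : form) :
    is_deg 0 u0 -> is_deg 1 u1 -> is_deg 3 u3 -> wedge u3 psi = 0 ->
    hodge (wedge (wedge u0 psi + fscale 3 (wedge u1 phi) + hodge u3) phi) = fscale 7 u0.
  move=> u0_0 u1_1 u3_3 u3_psi; rewrite !wedgeDl wedgeZl wedge_phi_phi // wedge_hodge_phi //.
  by rewrite u3_psi fscaler0 !addr0 hodge_wedge_psi_phi.
have vector_part (u1 u3 : form) : is_deg 1 u1 -> wedge u3 phi = 0 ->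
    wedge (hodge (fscale 3 (wedge u1 phi) + hodge u3)) phi = fscale (3 * -4) (hodge u1).
  move=> u1_1 u3_phi; rewrite hodgeD hodgeZ hodgeK wedgeDl wedgeZl u3_phi addr0.
  by rewrite wedge_hodge_wedge_phi // fscalerA.
have E1 := etrans (esym dphi_t) dphi_s; have E2 := etrans (esym dpsi_t) dpsi_s.
have eq0 : t0 = s0.
  apply: (fscaler_inj _ 7); first by rewrite pnatr_eq0.
  by rewrite -(scalar_part t0 t1 t3) // E1 scalar_part.
move: E1; rewrite eq0 -!addrA => /addrI E1.
have eq1 : t1 = s1.
  apply/hodge_inj/(fscaler_inj _ (3 * -4)); first by rewrite mulf_neq0 // ?oppr_eq0 pnatr_eq0.
  by rewrite -(vector_part t1 t3) // E1 vector_part.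
move: E1 E2; rewrite eq1 => /addrI /hodge_inj eq3 /addrI E2.
split=> //; apply: (fscaler_inj _ 2); first by rewrite pnatr_eq0.
by rewrite -!hodge_wedge_phi_quadratic // E2.
Qed.

End G2Identities.

Definition in_nb (m : nat) : bool := (2 <= m <= 5)%N.
Definition ad_slot (a : nat) : nat := if a == 0%N then 6 else if a == 1%N then 0 else 1.
Definition diag_basis (r a b : nat) : int :=
  if a == b then (if a == r then 1 else if a == 3 then -1 else 0) else 0.
(* [basis_consts (a, r)] are the structure constants of g_{A,B,C} when the a-th matrix
   of (A, B, C) is E_rr - E_44 and the two others vanish. *)
Definition basis_consts (q : nat * nat) (x y k : nat) : int :=
  if ~~ in_nb x && in_nb y && in_nb k then
    (if x == ad_slot q.1 then diag_basis q.2 (k - 2) (y - 2) else 0)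
  else if in_nb x && ~~ in_nb y && in_nb k then
    (if y == ad_slot q.1 then - diag_basis q.2 (k - 2) (x - 2) else 0)
  else 0.
Definition basis_index : seq (nat * nat) := [seq (a, r) | a <- iota 0 3, r <- iota 0 3].

Definition torsion_certificate (cz : nat -> nat -> nat -> int) : bool :=
  let dphi := sdform cz sphi in
  let dpsi := sdform cz spsi in
  [&& sdeg 3 (shodge dphi), sdeg 2 (shodge dpsi),
      eq_sform (swedge (shodge dphi) sphi) [::], eq_sform (swedge (shodge dphi) spsi) [::]
    & eq_sform (swedge (shodge dpsi) spsi) [::]
      && eq_sform dpsi (swedge (sopp (shodge dpsi)) sphi)].

Lemma basis_torsion_certificate :
  all (fun q => torsion_certificate (basis_consts q)) basis_index.
Proof. by vm_compute. Qed.

Section StructureConstants.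
Variable R : realType.
Local Notation form := {ffun {set 'I_7} -> R}.
Local Notation consts := ('I_7 -> 'I_7 -> 'I_7 -> R).

Lemma d1_lincomb {Q : Type} {r : seq Q} {lam : Q -> R} {cq : Q -> consts} {c : consts} :
  (forall i j k, c i j k = \sum_(q <- r) lam q * cq q i j k) ->
  forall k, d1 c k = \sum_(q <- r) fscale (lam q) (d1 (cq q) k).
Proof.
move=> c_dec k; rewrite /d1.
under eq_bigr => i _ do under eq_bigr => j _ do rewrite c_dec fscaler_suml.
under eq_bigr => i _ do rewrite exchange_big.
rewrite exchange_big -sumrN; apply: eq_bigr => q _.
rewrite fscalerN fscaler_sumr; congr (- _); apply: eq_bigr => i _.
by rewrite fscaler_sumr; apply: eq_bigr => j _; rewrite fscalerA.
Qed.

Lemma dform_lincomb {Q : Type} {r : seq Q} {lam : Q -> R} {cq : Q -> consts} {c : consts} a :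
  (forall i j k, c i j k = \sum_(q <- r) lam q * cq q i j k) ->
  dform c a = \sum_(q <- r) fscale (lam q) (dform (cq q) a).
Proof.
move=> c_dec; rewrite /dform.
under eq_bigr => I _ do under eq_bigr => i _ do
  rewrite (d1_lincomb c_dec) wedge_suml fscaler_sumr.
under eq_bigr => I _ do rewrite exchange_big fscaler_sumr.
rewrite exchange_big; apply: eq_bigr => q _.
rewrite fscaler_sumr; apply: eq_bigr => I _.
rewrite fscalerC fscaler_sumr; congr fscale; apply: eq_bigr => i _.
by rewrite wedgeZl fscalerC.
Qed.

Lemma traceless_diag_dec (M : 'M[R]_4) : is_diag_mx M -> \tr M = 0 ->
  forall a b, (a < 4)%N -> (b < 4)%N ->
  M (inord a) (inord b) = \sum_(r <- iota 0 3) M (inord r) (inord r) * (diag_basis r a b)%:~R.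
Proof.
move=> /is_diag_mxP M_diag trM.
pose m i := M (inord i) (inord i).
have {}trM : m 0 + m 1 + m 2 + m 3 = 0.
  rewrite -trM /mxtrace (eq_bigr (fun i : 'I_4 => m i)) => [|i _]; last by rewrite /m inord_val.
  by rewrite -(big_mkord xpredT m) /index_iota /= !big_cons big_nil !addrA addr0.
rewrite {}/m in trM.
move=> a b a_lt b_lt; rewrite /= !big_cons big_nil /diag_basis.
case: (eqVneq a b) => [<-|a_b].
  by move: a_lt; case: a => [|[|[|[|//]]]] _ /=; lra.
rewrite M_diag ?mulr0 ?addr0 //; apply: contra a_b => /eqP eq_ab.
by move: eq_ab; rewrite !inordK // => ->.
Qed.

Section Decomposition.
Variables (A B C : 'M[R]_4).
Hypotheses (A_diag : is_diag_mx A) (B_diag : is_diag_mx B) (C_diag : is_diag_mx C).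
Hypotheses (A_tr : \tr A = 0) (B_tr : \tr B = 0) (C_tr : \tr C = 0).

Definition ad_mx (a : nat) : 'M[R]_4 := if a == 0%N then A else if a == 1%N then B else C.
Definition diag_coef (q : nat * nat) : R := ad_mx q.1 (inord q.2) (inord q.2).

Lemma adM_dec (x : 'I_7) a b : (a < 4)%N -> (b < 4)%N ->
  adM A B C x (inord a) (inord b) =
  \sum_(q <- basis_index)
    diag_coef q * (if x == ad_slot q.1 :> nat then diag_basis q.2 a b else 0)%:~R.
Proof.
move=> a_lt b_lt; rewrite big_allpairs.
have ad_mx_dec m : \sum_(r <- iota 0 3) diag_coef (m, r) *
    (if x == ad_slot m :> nat then diag_basis r a b else 0)%:~R =
    if x == ad_slot m :> nat then ad_mx m (inord a) (inord b) else 0.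
  case: ifP => _; last by rewrite big1 // => r _; rewrite mulr0.
  rewrite (@traceless_diag_dec (ad_mx m)) //; rewrite /ad_mx; by do 2?case: ifP.
under eq_bigr => m _ do rewrite ad_mx_dec.
rewrite /= !big_cons big_nil /adM /ad_mx /=.
have o_val n : (n < 7)%N -> (x == o n) = (x == n :> nat).
  by move=> n_lt; rewrite -val_eqE /= inordK.
rewrite !o_val //; clear ad_mx_dec o_val.
by case: x => [[|[|[|[|[|[|[|//]]]]]]] _] /=; rewrite ?addr0 ?add0r ?mxE.
Qed.

Lemma gABC_dec x y k :
  gABC A B C x y k = \sum_(q <- basis_index) diag_coef q * intc R (basis_consts q) x y k.
Proof.
have sub2_lt (m : 'I_7) : in_n m -> (m - 2 < 4)%N by rewrite /in_n; lia.
rewrite /gABC /intc /basis_consts -[in_nb x]/(in_n x) -[in_nb y]/(in_n y) -[in_nb k]/(in_n k).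
case: ifP => [/andP [/andP [_ y_n] k_n]|_].
  by rewrite (adM_dec x _ _ (sub2_lt k k_n) (sub2_lt y y_n)).
case: ifP => [/andP [/andP [x_n _] k_n]|_]; last by rewrite big1 // => q _; rewrite mulr0.
rewrite (adM_dec y _ _ (sub2_lt k k_n) (sub2_lt x x_n)) -sumrN; apply: eq_bigr => q _.
by case: ifP; rewrite ?intrN ?mulrN ?mulr0z ?mulr0 ?oppr0.
Qed.

Local Notation d := (dform (gABC A B C)).
Local Notation lincomb_basis := (lincomb basis_index diag_coef).

Lemma dform_gABC s : d (form_of R s) = lincomb_basis (fun q => sdform (basis_consts q) s).
Proof.
rewrite (dform_lincomb _ gABC_dec).
by apply: eq_bigr => q _; rewrite dform_intc.
Qed.

Lemma torsion_diagonal :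
  is_torsion d (phiG2 R) 0 0 (- hodge (d (psiG2 R))) (hodge (d (phiG2 R))).
Proof.
have cert q : q \in basis_index -> torsion_certificate (basis_consts q).
  exact: allP basis_torsion_certificate q.
rewrite /is_torsion -/(psiG2 R) !wedge0l !fscaler0 !add0r hodgeK.
rewrite psiG2_form_of phiG2_form_of !dform_gABC !lincomb_shodge.
split; [split|split; [split|split]]; [exact: is_deg0 | exact: is_deg0 | | | | | | by [] |].
- by apply/is_degN/is_deg_lincomb => q /cert /and5P [_ + _ _ _].
- by apply: is_deg_lincomb => q /cert /and5P [+ _ _ _ _].
- rewrite wedgeNl lincomb_swedge; apply/eqP; rewrite oppr_eq0.
  apply/eqP/lincomb_eq0 => q.
  by move=> /cert /and5P [_ _ _ _ /andP [+ _]].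
- by rewrite lincomb_swedge; apply: lincomb_eq0 => q /cert /and5P [_ _ + _ _].
- by rewrite lincomb_swedge; apply: lincomb_eq0 => q /cert /and5P [_ _ _ + _].
- rewrite lincomb_sopp lincomb_swedge; apply: eq_lincomb => q.
  by move=> /cert /and5P [_ _ _ _ /andP [_ +]].
Qed.

End Decomposition.
End StructureConstants.

Theorem corollary4p8 (R : realType) (A B C : 'M[R]_4) :
  is_diag_mx A -> is_diag_mx B -> is_diag_mx C ->
  \tr A = 0 -> \tr B = 0 -> \tr C = 0 ->
  let d := dform (gABC A B C) in
  let phi := phiG2 R in
  let psi := hodge phi in
  is_torsion d phi 0 0 (- hodge (d psi)) (hodge (d phi)) /\
  (forall t0 t1 t2 t3 : {ffun {set 'I_7} -> R}, is_torsion d phi t0 t1 t2 t3 ->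
     [/\ t0 = 0, t1 = 0, t2 = - hodge (d psi) & t3 = hodge (d phi)]).
Proof.
move=> A_diag B_diag C_diag A_tr B_tr C_tr d phi psi.
have torsion := @torsion_diagonal R A B C A_diag B_diag C_diag A_tr B_tr C_tr.
by split=> // t0 t1 t2 t3 /torsion_unique; apply.
Qed.
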